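(* In the directed variant of the greedy routing network creation game on any finite point set in any metric space, the Price of Anarchy equals $1$: every pure Nash equilibrium $\mathbf s$ satisfies $c(\mathbf s)=c(\mathbf s^* )$ where $\mathbf s^*$ is a social optimum.
   Context: Let $\mathcal P$ be a finite set of $n\ge2$ points (agents) in a metric space with metric $d$. In the directed variant each agent $u$ chooses a strategy $S_u\subseteq\{(u,v):v\in\mathcal P\setminus\{u\}\}$ of directed edges, which it owns. A profile $\mathbf s=(S_u)_u$ induces the directed network $G(\mathbf s)=(\mathcal P,\bigcup_u S_u)$. A greedy routing path from $u$ to $w$ is a directed path $(x_1=u,\dots,x_j=w)$ in $G(\mathbf s)$ with $d(x_i,w)>d(x_{i+1},w)$ for all $i$; $u$ is greedy connected if it has a greedy routing path to every other agent. The cost of $u$ is $c_u(\mathbf s)=|S_u|$ if $u$ is greedy connected and $\infty$ otherwise; the social cost is $c(\mathbf s)=\sum_u c_u(\mathbf s)$. A pure Nash equilibrium (NE) is a profile in which no agent can strictly decrease its cost by unilaterally changing its strategy; a social optimum minimizes social cost. The Price of Anarchy is the worst-case ratio $c(\mathbf s)/c(\mathbf s^* )$ over NE $\mathbf s$ and instances, where $\mathbf s^*$ is a social optimum. *)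

From mathcomp Require Import all_boot all_order all_algebra.
From mathcomp Require Import reals.
Set Implicit Arguments. Unset Strict Implicit. Unset Printing Implicit Defensive.
Import Order.TTheory GRing.Theory Num.Theory.
Local Open Scope ring_scope.

Section GreedyRouting.
Variables (T : finType) (R : realType) (d : T -> T -> R).

Definition is_metric : Prop :=
  [/\ forall x y, 0 <= d x y,
      forall x y, d x y = 0 <-> x = y,
      forall x y, d x y = d y x &
      forall x y z, d x z <= d x y + d y z].

(* A strategy profile: s u is the set of heads v of the edges (u,v) owned by u. *)
Definition profile := T -> {set T}.

Definition valid (s : profile) : Prop := forall u, u \notin s u.

Definition greedy_step (s : profile) (w : T) : rel T :=
  fun x y => (y \in s x) && (d y w < d x w).

Definition greedy_path (s : profile) (u w : T) : bool :=
  connect (greedy_step s w) u w.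

Definition greedy_connected (s : profile) (u : T) : bool :=
  [forall w, (w != u) ==> greedy_path s u w].

(* Costs in nat extended by infinity: None = infinity. *)
Definition cost (s : profile) (u : T) : option nat :=
  if greedy_connected s u then Some #|s u| else None.

Definition social_cost (s : profile) : option nat :=
  if [forall u, greedy_connected s u] then Some (\sum_u #|s u|)%N else None.

Definition lt_cost (a b : option nat) : bool :=
  match a, b with
  | Some x, Some y => (x < y)%N
  | Some _, None => true
  | None, _ => false
  end.

Definition le_cost (a b : option nat) : bool :=
  match a, b with
  | Some x, Some y => (x <= y)%N
  | _, None => true
  | None, Some _ => false
  end.

Definition deviate (s : profile) (u : T) (S : {set T}) : profile :=
  fun v => if v == u then S else s v.

Definition is_NE (s : profile) : Prop :=
  valid s /\
  forall u (S : {set T}), u \notin S ->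
    ~~ lt_cost (cost (deviate s u S) u) (cost s u).

Definition is_social_optimum (s : profile) : Prop :=
  valid s /\ forall s' : profile, valid s' -> le_cost (social_cost s) (social_cost s').

End GreedyRouting.

From mathcomp Require Import all_boot all_order all_algebra.
From mathcomp Require Import reals.
Set Implicit Arguments. Unset Strict Implicit. Unset Printing Implicit Defensive.
Import Order.TTheory GRing.Theory Num.Theory.
Local Open Scope ring_scope.

(* In a Nash equilibrium every agent is greedy connected, since buying edges
   to all other agents always yields finite cost.  Consequently an agent u may
   copy its strategy from any profile s' in which it is greedy connected: the
   first hop y of u's greedy path to w in G(s') is strictly closer to w than u,
   and from y the equilibrium network already routes greedily to w.  Because
   distances to w strictly decrease along that route, it never passes through
   u, so u's deviation does not destroy it.  Hence |s u| <= |s' u| for every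
   agent, and summing over agents shows that the equilibrium is optimal. *)

Section GreedyRoutingNE.
Variables (T : finType) (R : realType) (d : T -> T -> R).

Lemma metric_self_lt x y : is_metric d -> x != y -> d y y < d x y.
Proof.
case=> d_ge0 d_eq0 _ _ neq_xy.
have -> : d y y = 0 by apply/d_eq0.
rewrite lt_def d_ge0 andbT; apply: contra neq_xy => /eqP /d_eq0 ->.
exact: eqxx.
Qed.

Lemma greedy_step_deviate (s : profile T) u (S : {set T}) w y (p : seq T) :
  d y w < d u w -> path (greedy_step d s w) y p ->
  path (greedy_step d (deviate s u S) w) y p.
Proof.
elim: p y => [//|z p IHp] y lt_yu /= /andP[/andP[s_yz lt_zy] pathp].
have neq_yu : y != u by apply: contraTneq lt_yu => ->; rewrite ltxx.
rewrite /greedy_step /deviate (negbTE neq_yu) s_yz lt_zy /=.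
exact: IHp (lt_trans lt_zy lt_yu) pathp.
Qed.

Lemma greedy_path_deviate (s : profile T) u (S : {set T}) w y :
  d y w < d u w -> greedy_path d s y w -> greedy_path d (deviate s u S) y w.
Proof.
move=> lt_yu /connectP[p pathp last_p]; apply/connectP; exists p => //.
exact: greedy_step_deviate.
Qed.

Lemma greedy_connected_deviate (s : profile T) u (S : {set T}) :
  (forall w, w != u ->
     exists2 y, y \in S & d y w < d u w /\ greedy_path d s y w) ->
  greedy_connected d (deviate s u S) u.
Proof.
move=> hops; apply/forallP=> w; apply/implyP=> neq_wu.
have [y S_y [lt_yu path_yw]] := hops w neq_wu.
apply: (connect_trans (y := y)); last exact: greedy_path_deviate.
by apply: connect1; rewrite /greedy_step /deviate eqxx S_y lt_yu.
Qed.

Lemma greedy_path_first_hop (s : profile T) u w :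
  w != u -> greedy_path d s u w -> exists2 y, y \in s u & d y w < d u w.
Proof.
move=> neq_wu /connectP[[|y p] /= pathp last_p].
  by rewrite last_p eqxx in neq_wu.
by case/andP: pathp => /andP[s_uy lt_yu] _; exists y.
Qed.

Lemma NE_greedy_connected (s : profile T) u :
  is_metric d -> is_NE d s -> greedy_connected d s u.
Proof.
move=> metric_d [_ no_better]; apply: contraT => disconnected.
have u_notin : u \notin [set~ u] by rewrite !inE eqxx.
have /negP[] := no_better u _ u_notin.
rewrite /cost (negbTE disconnected) greedy_connected_deviate // => w neq_wu.
exists w; first by rewrite !inE.
by split; [apply: metric_self_lt => //; rewrite eq_sym | apply: connect0].
Qed.

Lemma NE_card_le (s s' : profile T) u :
  is_metric d -> is_NE d s -> valid s' -> greedy_connected d s' u ->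
  (#|s u| <= #|s' u|)%N.
Proof.
move=> metric_d NE_s valid_s' conn_s'.
have conn_s w : greedy_connected d s w by apply: NE_greedy_connected.
have copy_conn : greedy_connected d (deviate s u (s' u)) u.
  apply: greedy_connected_deviate => w neq_wu.
  have [y s'_y lt_yu] :=
    greedy_path_first_hop neq_wu (implyP (forallP conn_s' w) neq_wu).
  exists y => //; split => //.
  have [->|neq_yw] := eqVneq y w; first exact: connect0.
  by apply: (implyP (forallP (conn_s y) w)); rewrite eq_sym.
have := NE_s.2 u (s' u) (valid_s' u).
by rewrite /cost conn_s copy_conn /= /deviate eqxx -leqNgt.
Qed.

Lemma social_cost_connected (s : profile T) :
  (forall u, greedy_connected d s u) -> social_cost d s = Some (\sum_u #|s u|)%N.
Proof. by move=> conn_s; rewrite /social_cost (introT forallP conn_s). Qed.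

End GreedyRoutingNE.

Theorem mainTheorem6 (T : finType) (R : realType) (d : T -> T -> R) :
  (2 <= #|T|)%N -> is_metric d ->
  forall s sopt : profile T,
    is_NE d s -> is_social_optimum d sopt ->
    social_cost d s = social_cost d sopt.
Proof.
move=> _ metric_d s sopt NE_s [valid_opt opt_le].
have cost_s := social_cost_connected (fun u => NE_greedy_connected u metric_d NE_s).
have := opt_le s NE_s.1; rewrite cost_s /social_cost.
case: ifP => // /forallP conn_opt /= sum_le.
congr Some; apply/eqP; rewrite eqn_leq sum_le andbT.
by apply: leq_sum => u _; apply: NE_card_le metric_d NE_s valid_opt (conn_opt u).
Qed.
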